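(* Assume the setting of the context, and in addition that $c_n\to1$ and $\sum_{n=1}^\infty\sqrt{c_n-c_{n-1}}<\infty$. Then for every $\omega\in\Omega$ the functions $\alpha_n(\cdot,\omega)$ converge uniformly on $[0,1]$ to a function $\alpha(\cdot,\omega)$; the resulting map $\alpha:[0,1]\times\Omega\to\mathbb{C}$ is measurable (and $\omega\mapsto\alpha(t,\omega)$ is measurable for every $t$), and for each $\omega\in\Omega$: (i) $\alpha(\cdot,\omega)$ is continuous at every $t\in[0,1]\setminus D$; in particular it is Riemann integrable on $[0,1]$; (ii) $\alpha(\cdot,\omega)$ is right-continuous with left limits at every dyadic rational; (iii) $|\alpha(t,\omega)|=1$ for all $t\in[0,1]$ and $\int_0^1\alpha(t,\omega)\,dt=\alpha_0$.
   Context: Identify $\mathbb{R}^2$ with $\mathbb{C}$; $D$ denotes the set of dyadic rationals in $[0,1]$. For $k\ge1$ the Rademacher function $r_k:[0,1]\to\{-1,1\}$ is $r_k(t)=(-1)^{\lfloor 2^k t\rfloor}$ for $t<1$ and $r_k(1)=-1$. For $k\ge1$ and $j\in\{1,\dots,2^{k-1}\}$ let $I_{kj}=\left[\frac{j-1}{2^{k-1}},\frac{j}{2^{k-1}}\right)$ if $j<2^{k-1}$ and $I_{k,2^{k-1}}=\left[\frac{2^{k-1}-1}{2^{k-1}},1\right]$; $1_{I_{kj}}$ is its indicator. Let $(\Omega,\mathcal F,P)$ be the product probability space $\Omega=\prod_{k\ge1}\prod_{j=1}^{2^{k-1}}\{-1,1\}$, each factor uniform, with coordinate maps $d_{kj}:\Omega\to\{-1,1\}$.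 Let $(c_n)_{n\ge0}$ be a nondecreasing real sequence with $c_0\ge0$ and $c_1>0$, and set $\theta_k=\arcsin\sqrt{(c_k-c_{k-1})/c_k}$ for $k\ge1$. Fix $\alpha_0\in\mathbb{C}$ with $|\alpha_0|=\sqrt{c_0}$. For $n\ge1$ put $\Theta_n(t,\omega)=\sum_{k=1}^{n}\sum_{j=1}^{2^{k-1}}r_k(t)1_{I_{kj}}(t)d_{kj}(\omega)\theta_k$ and $\alpha_n(t,\omega)=\sqrt{c_n/c_0}\,\alpha_0\exp(i\Theta_n(t,\omega))$ if $c_0\neq0$, $\alpha_n(t,\omega)=\sqrt{c_n}\exp(i\Theta_n(t,\omega))$ if $c_0=0$. *)

From Stdlib Require Import Reals Lra ZArith.
Open Scope R_scope.

Definition Cpx := (R * R)%type.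
Definition Cmul (z w : Cpx) : Cpx :=
  (fst z * fst w - snd z * snd w, fst z * snd w + snd z * fst w).
Definition Cscal (a : R) (z : Cpx) : Cpx := (a * fst z, a * snd z).
Definition Csub (z w : Cpx) : Cpx := (fst z - fst w, snd z - snd w).
Definition Cnorm (z : Cpx) : R := sqrt (fst z * fst z + snd z * snd z).
Definition Cexpi (th : R) : Cpx := (cos th, sin th).

(** * The sample space: Omega = product of {-1,1} over the index pairs (k,j).
    Coordinates are encoded as booleans (true = 1, false = -1); the
    coordinates with k = 0 or j outside 1..2^(k-1) are dummy (unused). *)
Definition Omega := nat -> nat -> bool.
Definition d (k j : nat) (w : Omega) : R := if w k j then 1 else -1.

Definition dyadic (t : R) : Prop :=
  0 <= t <= 1 /\ exists m k : nat, t = INR m / 2 ^ k.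

Definition rad (k : nat) (t : R) : R :=
  if Rlt_dec t 1 then (if Z.even (Int_part (2 ^ k * t)) then 1 else -1) else -1.

Definition ind (k j : nat) (t : R) : R :=
  let N := Nat.pow 2 (k - 1) in
  if Nat.ltb j N then
    (if Rle_dec (INR (j - 1) / INR N) t then
       (if Rlt_dec t (INR j / INR N) then 1 else 0) else 0)
  else
    (if Rle_dec (INR (N - 1) / INR N) t then
       (if Rle_dec t 1 then 1 else 0) else 0).

Fixpoint sumR (f : nat -> R) (n : nat) : R :=
  match n with O => 0 | S m => sumR f m + f m end.

Definition theta (c : nat -> R) (k : nat) : R :=
  asin (sqrt ((c k - c (k - 1)%nat) / c k)).

Definition Theta (c : nat -> R) (n : nat) (t : R) (w : Omega) : R :=
  sumR (fun k' => let k := S k' in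
          sumR (fun j' => let j := S j' in
                  rad k t * ind k j t * d k j w * theta c k)
               (Nat.pow 2 (k - 1)))
       n.

Definition alpha_n (c : nat -> R) (alpha0 : Cpx) (n : nat) (t : R) (w : Omega) : Cpx :=
  if Req_EM_T (c O) 0 then Cscal (sqrt (c n)) (Cexpi (Theta c n t w))
  else Cscal (sqrt (c n / c O)) (Cmul alpha0 (Cexpi (Theta c n t w))).

Inductive sigma_gen {T : Type} (G : (T -> Prop) -> Prop) : (T -> Prop) -> Prop :=
  | sg_base A : G A -> sigma_gen G A
  | sg_full : sigma_gen G (fun _ => True)
  | sg_compl A : sigma_gen G A -> sigma_gen G (fun x => ~ A x)
  | sg_union (A : nat -> T -> Prop) :
      (forall n, sigma_gen G (A n)) -> sigma_gen G (fun x => exists n, A n x).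

Definition R_open (U : R -> Prop) : Prop :=
  forall x, U x -> exists eps, 0 < eps /\ forall y, Rabs (y - x) < eps -> U y.
Definition C_open (U : Cpx -> Prop) : Prop :=
  forall z, U z -> exists eps, 0 < eps /\ forall y, Cnorm (Csub y z) < eps -> U y.

Definition borel_R : (R -> Prop) -> Prop := sigma_gen R_open.
Definition borel_C : (Cpx -> Prop) -> Prop := sigma_gen C_open.

Definition cyl_sigma : (Omega -> Prop) -> Prop :=
  sigma_gen (fun B => exists k j, forall w, B w <-> w k j = true).

Definition prod_sigma : (R * Omega -> Prop) -> Prop :=
  sigma_gen (fun S => exists A B, borel_R A /\ cyl_sigma B /\
                       forall p, S p <-> (A (fst p) /\ B (snd p))).

(* On each dyadic cell [m/2^n, (m+1)/2^n) every r_k and 1_(I_kj) with k <= n is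
   constant, so Theta_n is constant there, and refining a cell changes the angle by
   +-theta_(n+1).  Since theta_k <= 3 sqrt((c_k - c_(k-1)) / c_1) is summable, Theta_n
   converges uniformly to Theta with error the tail of sum theta_k, and
   alpha = phase * e^(i Theta) where |phase| = 1 and phase * sqrt c_0 = alpha_0.
   Inside a cell of level N the limit Theta varies by at most twice that tail: this
   gives continuity off the dyadics, right-continuity and left limits.  On a cell,
   Theta_n depends on finitely many coordinates, which gives measurability.  The two
   children of a cell carry the angles g +- theta_(n+1), so the integrals of cos Theta_n
   and sin Theta_n are prod_(k<=n) cos theta_k = sqrt(c_0/c_n) and 0; in the limit the
   integral of alpha is phase * sqrt c_0 = alpha_0. *)

From Stdlib Require Import Reals Lra Lia ZArith List Classical FunctionalExtensionality PropExtensionality.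
From Coquelicot Require Import Coquelicot.
Open Scope R_scope.

(** * Generated sigma-algebras *)

Section SigmaAlgebra.

Variables (T : Type) (G : (T -> Prop) -> Prop).

Lemma sigma_gen_ext (A B : T -> Prop) :
  sigma_gen G A -> (forall x, A x <-> B x) -> sigma_gen G B.
Proof.
  intros HA HAB. replace B with A; auto.
  apply functional_extensionality; intro x; apply propositional_extensionality; auto.
Qed.

Lemma sigma_gen_const (P : Prop) : sigma_gen G (fun _ => P).
Proof.
  destruct (classic P) as [HP | HP].
  - eapply sigma_gen_ext; [apply sg_full | tauto].
  - eapply sigma_gen_ext; [apply sg_compl, sg_full | tauto].
Qed.

Lemma sigma_gen_inter (A : nat -> T -> Prop) :
  (forall n, sigma_gen G (A n)) -> sigma_gen G (fun x => forall n, A n x).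
Proof.
  intros HA. eapply sigma_gen_ext.
  - apply sg_compl, (sg_union G (fun n x => ~ A n x)). intro n; apply sg_compl, HA.
  - intro x; split.
    + intros H n. apply NNPP; intro Hn; eauto.
    + intros H [n Hn]; auto.
Qed.

Lemma sigma_gen_union2 (A B : T -> Prop) :
  sigma_gen G A -> sigma_gen G B -> sigma_gen G (fun x => A x \/ B x).
Proof.
  intros HA HB. eapply sigma_gen_ext.
  - apply (sg_union G (fun n => match n with O => A | _ => B end)). intros [|n]; auto.
  - intro x; split.
    + intros [[|n] H]; auto.
    + intros [H | H]; [exists O | exists 1%nat]; auto.
Qed.

Lemma sigma_gen_inter2 (A B : T -> Prop) :
  sigma_gen G A -> sigma_gen G B -> sigma_gen G (fun x => A x /\ B x).
Proof.
  intros HA HB. eapply sigma_gen_ext.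
  - apply sg_compl, sigma_gen_union2; [exact (sg_compl G A HA) | exact (sg_compl G B HB)].
  - intro x; tauto.
Qed.

Lemma sigma_gen_preimage_borel_C (g : T -> Cpx) :
  (forall U, C_open U -> sigma_gen G (fun x => U (g x))) ->
  forall E, borel_C E -> sigma_gen G (fun x => E (g x)).
Proof.
  intros HU E HE. induction HE.
  - auto.
  - apply sg_full.
  - apply sg_compl; auto.
  - apply (sg_union G (fun n x => A n (g x))); auto.
Qed.

(* [f x] lies in the open set [V] iff some ball of radius [1/(k+1)] around
   [fn n x] stays in [V] for all large [n]; the hypothesis on [fn] is that every
   [fn n] is measurable for the discrete sigma-algebra on [R]. *)
Lemma sigma_gen_lim (fn : nat -> T -> R) (f : T -> R) :
  (forall x, Un_cv (fun n => fn n x) (f x)) ->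
  (forall n (P : R -> Prop), sigma_gen G (fun x => P (fn n x))) ->
  forall V, R_open V -> sigma_gen G (fun x => V (f x)).
Proof.
  intros Hcv Hm V HV. eapply sigma_gen_ext.
  - apply (sg_union G (fun k x => exists N, forall n, (N <= n)%nat ->
        forall y, Rabs (y - fn n x) < / INR (S k) -> V y)).
    intro k. apply (sg_union G (fun N x => forall n, (N <= n)%nat ->
        forall y, Rabs (y - fn n x) < / INR (S k) -> V y)).
    intro N. apply sigma_gen_inter. intro n.
    apply (Hm n (fun z => (N <= n)%nat -> forall y, Rabs (y - z) < / INR (S k) -> V y)).
  - intro x; split.
    + intros [k [N HN]].
      assert (Hk : 0 < / INR (S k)) by (apply Rinv_0_lt_compat, lt_0_INR; lia).
      destruct (Hcv x _ Hk) as [N' HN'].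
      apply (HN (max N N')); [lia|]. rewrite Rabs_minus_sym. apply HN'; lia.
    + intros Hx. destruct (HV _ Hx) as [eps [He Heps]].
      destruct (archimed_cor1 (eps / 2)) as [k [Hk Hk0]]; [lra|].
      assert (Hk' : 0 < / INR k) by (apply Rinv_0_lt_compat, lt_0_INR; lia).
      destruct (Hcv x _ Hk') as [N HN]. exists (pred k), N. intros n Hn y Hy.
      replace (S (pred k)) with k in Hy by lia.
      apply Heps. specialize (HN n Hn). unfold R_dist in HN.
      replace (y - f x) with ((y - fn n x) + (fn n x - f x)) by ring.
      eapply Rle_lt_trans; [apply Rabs_triang | lra].
Qed.

End SigmaAlgebra.

Definition set_coord (w : Omega) (k j : nat) (b : bool) : Omega :=
  fun k' j' => if andb (Nat.eqb k' k) (Nat.eqb j' j) then b else w k' j'.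

Lemma cyl_sigma_finite_dependence (L : list (nat * nat)) : forall (Q : Omega -> Prop),
  (forall w w', (forall k j, In (k, j) L -> w k j = w' k j) -> (Q w <-> Q w')) ->
  cyl_sigma Q.
Proof.
  induction L as [|[k j] L IH]; intros Q HQ.
  - eapply sigma_gen_ext; [apply (sigma_gen_const _ _ (Q (fun _ _ => true))) |].
    intro w; apply HQ; simpl; tauto.
  - assert (Hset : forall b, cyl_sigma (fun w => Q (set_coord w k j b))).
    { intro b. apply IH. intros w w' Hw. apply HQ. intros k' j' [E | Hin].
      - inversion E; subst. unfold set_coord. rewrite !Nat.eqb_refl. reflexivity.
      - unfold set_coord. destruct (_ && _)%bool; auto. }
    assert (Hcoord : cyl_sigma (fun w => w k j = true)).
    { apply sg_base. exists k, j. tauto. }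
    eapply sigma_gen_ext.
    + apply sigma_gen_union2; apply sigma_gen_inter2; [exact Hcoord | apply (Hset true)
        | apply sg_compl, Hcoord | apply (Hset false)].
    + intro w. assert (Hself : Q (set_coord w k j (w k j)) <-> Q w).
      { apply HQ. intros k' j' _. unfold set_coord.
        destruct (Nat.eqb_spec k' k), (Nat.eqb_spec j' j); subst; auto. }
      destruct (w k j) eqn:Ew; split; intuition congruence.
Qed.

(** * Dyadic cells and the step functions [Theta_n] *)

(* The index [m] of the cell [[m/2^n, (m+1)/2^n)] containing [t]; as for [I_kj],
   the last cell is closed, and points outside [[0,1]] are clamped. *)
Definition dyadic_index (n : nat) (t : R) : nat :=
  if Rlt_dec t 1 then Z.to_nat (Int_part (2 ^ n * t)) else Nat.pred (2 ^ n)%nat.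

Lemma pow2_nat_gt0 n : (0 < 2 ^ n)%nat.
Proof. apply Nat.neq_0_lt_0, Nat.pow_nonzero; lia. Qed.

Lemma INR_pow2 n : INR (2 ^ n)%nat = 2 ^ n.
Proof. rewrite pow_INR. reflexivity. Qed.

Lemma pow2_gt0 n : 0 < 2 ^ n.
Proof. apply pow_lt; lra. Qed.

Lemma dyadic_index_spec n t : 0 <= t < 1 ->
  INR (dyadic_index n t) <= 2 ^ n * t < INR (dyadic_index n t) + 1.
Proof.
  intros Ht. unfold dyadic_index. destruct (Rlt_dec t 1) as [_ | ]; [| lra].
  pose proof (base_Int_part (2 ^ n * t)) as [B1 B2]. pose proof (pow2_gt0 n).
  assert (Hz : (0 <= Int_part (2 ^ n * t))%Z).
  { assert (-1 < Int_part (2 ^ n * t))%Z by (apply lt_IZR; simpl; nra). lia. }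
  rewrite INR_IZR_INZ, Z2Nat.id by auto. lra.
Qed.

Lemma dyadic_index_neg n t : t < 0 -> dyadic_index n t = O.
Proof.
  intros H. unfold dyadic_index. destruct (Rlt_dec t 1) as [_ | ]; [| lra].
  pose proof (base_Int_part (2 ^ n * t)) as [B1 B2]. pose proof (pow2_gt0 n).
  assert (Int_part (2 ^ n * t) < 0)%Z by (apply lt_IZR; simpl; nra).
  destruct (Int_part (2 ^ n * t)); simpl; auto; lia.
Qed.

Lemma dyadic_index_ge1 n t : 1 <= t -> dyadic_index n t = Nat.pred (2 ^ n).
Proof. intros H. unfold dyadic_index. destruct (Rlt_dec t 1); [lra | auto]. Qed.

Lemma dyadic_index_lt n t : (dyadic_index n t < 2 ^ n)%nat.
Proof.
  pose proof (pow2_nat_gt0 n). pose proof (pow2_gt0 n).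
  destruct (Rlt_dec t 0). { rewrite dyadic_index_neg; auto. }
  destruct (Rlt_dec t 1) as [Ht1 |]; [| rewrite dyadic_index_ge1; lra || lia].
  destruct (dyadic_index_spec n t) as [Hs _]; [lra |].
  apply INR_lt. rewrite INR_pow2.
  assert (2 ^ n * t < 2 ^ n * 1) by (apply Rmult_lt_compat_l; lra). lra.
Qed.

Lemma dyadic_index_eq n t m :
  0 <= t < 1 -> INR m <= 2 ^ n * t < INR m + 1 -> dyadic_index n t = m.
Proof.
  intros Ht Hm. destruct (dyadic_index_spec n t Ht).
  assert (m < S (dyadic_index n t))%nat by (apply INR_lt; rewrite S_INR; lra).
  assert (dyadic_index n t < S m)%nat by (apply INR_lt; rewrite S_INR; lra).
  lia.
Qed.

Lemma dyadic_index_char n t m : dyadic_index n t = m <->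
  ((m < 2 ^ n)%nat /\ (m = O \/ INR m <= 2 ^ n * t) /\
   (S m = (2 ^ n)%nat \/ 2 ^ n * t < INR m + 1)).
Proof.
  pose proof (pow2_gt0 n) as Hp. pose proof (pow2_nat_gt0 n) as Hpn.
  pose proof (dyadic_index_lt n t).
  destruct (Rlt_dec t 0) as [Hneg | Hneg]; [| destruct (Rlt_dec t 1) as [Hlt | Hlt]].
  - rewrite dyadic_index_neg by auto. split.
    + intros <-. repeat split; auto. right. simpl. nra.
    + intros [_ [[-> | H2] _]]; auto. pose proof (pos_INR m). nra.
  - split.
    + intros <-. pose proof (dyadic_index_spec n t). intuition lra.
    + intros [H1 [H2 H3]]. apply dyadic_index_eq; [lra |]. split.
      * destruct H2 as [-> | ]; auto. simpl; nra.
      * destruct H3 as [E |]; auto. rewrite <- S_INR, E, INR_pow2. nra.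
  - rewrite dyadic_index_ge1 by lra. split.
    + intros <-. repeat split; [lia | right | left; lia].
      rewrite <- Nat.sub_1_r, minus_INR, INR_pow2 by lia. simpl. nra.
    + intros [H1 [_ [H3 | H3]]]; [lia |]. exfalso.
      assert (Hm : (S m <= 2 ^ n)%nat) by lia. apply le_INR in Hm.
      rewrite S_INR, INR_pow2 in Hm. nra.
Qed.

Lemma dyadic_index_S n t : dyadic_index n t = (dyadic_index (S n) t / 2)%nat.
Proof.
  set (M := dyadic_index (S n) t). pose proof (pow2_gt0 n).
  destruct (proj1 (dyadic_index_char (S n) t M) eq_refl) as [H1 [H2 H3]].
  pose proof (Nat.div_mod M 2 ltac:(lia)) as HM.
  pose proof (Nat.mod_upper_bound M 2 ltac:(lia)).
  set (q := (M / 2)%nat) in *. set (r := (M mod 2)%nat) in *.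
  assert (HMR : INR M = 2 * INR q + INR r) by (rewrite HM, plus_INR, mult_INR; reflexivity).
  assert (Hr : INR r = 0 \/ INR r = 1) by (destruct r as [|[|]]; simpl; auto; lia).
  pose proof (pos_INR q).
  rewrite Nat.pow_succ_r' in H1, H3. simpl pow in H2, H3.
  apply dyadic_index_char. repeat split.
  - lia.
  - destruct H2 as [H2 | H2]; [left; lia | destruct q; [left | right]; auto; nra].
  - destruct H3 as [H3 | H3]; [left; lia | right; nra].
Qed.

Lemma dyadic_index_scaled n s m :
  (m < 2 ^ n)%nat -> INR m <= 2 ^ n * s < INR m + 1 -> dyadic_index n s = m.
Proof.
  intros Hm Hs. pose proof (pow2_gt0 n). pose proof (pos_INR m).
  apply le_INR in Hm. rewrite S_INR, INR_pow2 in Hm.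
  apply dyadic_index_eq; [split |]; auto; nra.
Qed.

Lemma dyadic_index_right n t : 0 <= t < 1 -> exists delta, 0 < delta /\
  forall s, t <= s < t + delta -> dyadic_index n s = dyadic_index n t.
Proof.
  intros Ht. pose proof (pow2_gt0 n).
  destruct (dyadic_index_spec n t Ht) as [H1 H2].
  set (M := dyadic_index n t) in *.
  exists ((INR M + 1) / 2 ^ n - t). split.
  - cut (t < (INR M + 1) / 2 ^ n); [lra |].
    apply Rmult_lt_reg_l with (2 ^ n); auto. field_simplify; lra.
  - intros s Hs. apply dyadic_index_scaled; [apply dyadic_index_lt |].
    assert (Hs' : 2 ^ n * s < 2 ^ n * ((INR M + 1) / 2 ^ n)) by (apply Rmult_lt_compat_l; lra).
    field_simplify in Hs'; [| lra]. split; nra.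
Qed.

Lemma dyadic_index_nondyadic n t : 0 <= t <= 1 -> ~ dyadic t -> exists delta, 0 < delta /\
  forall s, Rabs (s - t) < delta -> dyadic_index n s = dyadic_index n t.
Proof.
  intros Ht Hd. pose proof (pow2_gt0 n).
  assert (Ht1 : t < 1).
  { destruct (Req_dec t 1) as [-> |]; [| lra].
    exfalso. apply Hd. split; [lra | exists 1%nat, O]. simpl. lra. }
  destruct (dyadic_index_spec n t ltac:(lra)) as [[H1 | E] H2];
    set (M := dyadic_index n t) in *.
  - pose proof (Rmin_l (2 ^ n * t - INR M) (INR M + 1 - 2 ^ n * t)).
    pose proof (Rmin_r (2 ^ n * t - INR M) (INR M + 1 - 2 ^ n * t)).
    set (r := Rmin (2 ^ n * t - INR M) (INR M + 1 - 2 ^ n * t)) in *.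
    assert (Hr : 0 < r) by (unfold r; apply Rmin_glb_lt; lra).
    exists (r / 2 ^ n). split; [apply Rdiv_lt_0_compat; auto |].
    intros s Hs. apply dyadic_index_scaled; [apply dyadic_index_lt |].
    assert (Hb : 2 ^ n * Rabs (s - t) < 2 ^ n * (r / 2 ^ n)) by (apply Rmult_lt_compat_l; auto).
    field_simplify in Hb; [| lra].
    destruct (Rle_dec s t); [rewrite Rabs_left1 in Hb | rewrite Rabs_right in Hb]; try lra;
      split; nra.
  - exfalso. apply Hd. split; [lra | exists M, n]. rewrite E. field. lra.
Qed.

Lemma dyadic_index_left n t : 0 < t <= 1 -> exists m delta, 0 < delta /\
  forall s, t - delta < s < t -> dyadic_index n s = m.
Proof.
  intros Ht. pose proof (pow2_gt0 n).
  (* [M] is the largest integer strictly below [2^n t]. *)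
  destruct (archimed (- (2 ^ n * t))) as [A1 A2].
  set (z := up (- (2 ^ n * t))) in *.
  assert (Hz : (0 <= - z)%Z).
  { assert (-1 < - z)%Z by (apply lt_IZR; rewrite opp_IZR; simpl; nra). lia. }
  assert (HM : INR (Z.to_nat (- z)) = - IZR z) by (rewrite INR_IZR_INZ, Z2Nat.id, opp_IZR; auto).
  set (M := Z.to_nat (- z)) in *.
  exists M, (t - INR M / 2 ^ n). split.
  - cut (INR M / 2 ^ n < t); [lra |].
    apply Rmult_lt_reg_l with (2 ^ n); auto. field_simplify; lra.
  - intros s Hs. apply dyadic_index_scaled.
    + apply INR_lt. rewrite INR_pow2.
      assert (2 ^ n * t <= 2 ^ n * 1) by (apply Rmult_le_compat_l; lra). lra.
    + assert (Hs' : 2 ^ n * (INR M / 2 ^ n) < 2 ^ n * s) by (apply Rmult_lt_compat_l; lra).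
      field_simplify in Hs'; [| lra]. split; nra.
Qed.

Lemma pow_m1_parity m : (-1) ^ m = if Nat.even m then 1 else -1.
Proof.
  induction m as [|m IH]; [reflexivity |].
  rewrite Nat.even_succ, <- Nat.negb_even. simpl. rewrite IH.
  destruct (Nat.even m); simpl; ring.
Qed.

Lemma Z_even_of_nat m : Z.even (Z.of_nat m) = Nat.even m.
Proof.
  induction m as [|m IH]; [reflexivity |].
  rewrite Nat2Z.inj_succ, Z.even_succ, Nat.even_succ, <- Nat.negb_even, <- Z.negb_even, IH.
  reflexivity.
Qed.

Lemma rad_dyadic_index k t : (1 <= k)%nat -> 0 <= t <= 1 ->
  rad k t = (-1) ^ dyadic_index k t.
Proof.
  intros Hk Ht. rewrite pow_m1_parity. unfold rad.
  destruct (Rlt_dec t 1) as [H1 | H1].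
  - unfold dyadic_index. destruct (Rlt_dec t 1) as [_ |]; [| contradiction].
    pose proof (pow2_gt0 k) as Hp. pose proof (base_Int_part (2 ^ k * t)) as [_ B].
    assert (Hz : (0 <= Int_part (2 ^ k * t))%Z).
    { assert (-1 < Int_part (2 ^ k * t))%Z by (apply lt_IZR; simpl; nra). lia. }
    rewrite <- Z_even_of_nat, Z2Nat.id by auto. reflexivity.
  - rewrite dyadic_index_ge1 by lra. destruct k as [|k]; [lia |].
    replace (Nat.pred (2 ^ S k)) with (2 * (2 ^ k - 1) + 1)%nat.
    2: { pose proof (pow2_nat_gt0 k). rewrite Nat.pow_succ_r'. lia. }
    rewrite Nat.even_odd. reflexivity.
Qed.

Lemma div_le_iff a b t : 0 < b -> (a / b <= t <-> a <= b * t).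
Proof.
  intros Hb. split; intro H.
  - apply Rmult_le_compat_l with (r := b) in H; [| lra]. field_simplify in H; lra.
  - apply Rmult_le_reg_l with b; auto. field_simplify; lra.
Qed.

Lemma div_lt_iff a b t : 0 < b -> (t < a / b <-> b * t < a).
Proof.
  intros Hb. split; intro H.
  - apply Rmult_lt_compat_l with (r := b) in H; [| lra]. field_simplify in H; lra.
  - apply Rmult_lt_reg_l with b; auto. field_simplify; lra.
Qed.

Lemma ind_dyadic_index n j t : 0 <= t <= 1 -> (j < 2 ^ n)%nat ->
  ind (S n) (S j) t = if Nat.eq_dec j (dyadic_index n t) then 1 else 0.
Proof.
  intros Ht Hj. unfold ind. cbv zeta.
  replace (S n - 1)%nat with n by lia. replace (S j - 1)%nat with j by lia.
  pose proof (pow2_gt0 n) as Hp. pose proof (pow2_nat_gt0 n).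
  rewrite INR_pow2, S_INR.
  assert (Hlow : (j = O \/ INR j <= 2 ^ n * t) <-> INR j <= 2 ^ n * t).
  { split; [intros [-> | ]; auto; simpl; nra | auto]. }
  pose proof (dyadic_index_char n t j) as Hc. rewrite Hlow in Hc.
  destruct (Nat.ltb_spec (S j) (2 ^ n)) as [Hlt | Hge].
  - assert (Hup : (S j = (2 ^ n)%nat \/ 2 ^ n * t < INR j + 1) <-> 2 ^ n * t < INR j + 1)
      by (split; [intros [ | ]; auto; lia | auto]).
    rewrite Hup in Hc.
    destruct (Nat.eq_dec j (dyadic_index n t)) as [E | E].
    + destruct (proj1 Hc (eq_sym E)) as [_ [Hl Hu]].
      destruct (Rle_dec (INR j / 2 ^ n) t) as [_ | C]; [| exfalso; apply C, div_le_iff; auto].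
      destruct (Rlt_dec t ((INR j + 1) / 2 ^ n)) as [_ | C];
        [reflexivity | exfalso; apply C, div_lt_iff; auto].
    + destruct (Rle_dec (INR j / 2 ^ n) t) as [H1 |]; [| reflexivity].
      destruct (Rlt_dec t ((INR j + 1) / 2 ^ n)) as [H2 |]; [| reflexivity].
      rewrite div_le_iff in H1 by auto. rewrite div_lt_iff in H2 by auto.
      exfalso. apply E, eq_sym, Hc. auto.
  - assert (Ej : INR j = 2 ^ n - 1).
    { replace j with (2 ^ n - 1)%nat by lia. rewrite minus_INR, INR_pow2 by lia. reflexivity. }
    rewrite minus_INR, INR_pow2 by lia. simpl INR. rewrite Ej in Hc.
    destruct (Rle_dec t 1) as [_ |]; [| lra].
    destruct (Nat.eq_dec j (dyadic_index n t)) as [E | E].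
    + destruct (proj1 Hc (eq_sym E)) as [_ [Hl _]].
      destruct (Rle_dec ((2 ^ n - 1) / 2 ^ n) t) as [_ | C];
        [reflexivity | exfalso; apply C, div_le_iff; auto].
    + destruct (Rle_dec ((2 ^ n - 1) / 2 ^ n) t) as [H1 |]; [| reflexivity].
      rewrite div_le_iff in H1 by auto.
      exfalso. apply E, eq_sym, Hc. repeat split; auto. left; lia.
Qed.

(* [Theta_n] on the [m]-th dyadic cell of level [n]: the cell lies in [I_{n,m/2+1}],
   and [r_n = (-1)^m] on it. *)
Fixpoint cell_angle (c : nat -> R) (n m : nat) (w : Omega) : R :=
  match n with
  | O => 0
  | S n' => cell_angle c n' (m / 2) w + (-1) ^ m * d (S n') (S (m / 2)) w * theta c (S n')
  end.

Definition Theta_cell (c : nat -> R) (n : nat) (t : R) (w : Omega) : R :=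
  cell_angle c n (dyadic_index n t) w.

Lemma Theta_cell_S c n t w : Theta_cell c (S n) t w =
  Theta_cell c n t w + (-1) ^ dyadic_index (S n) t * d (S n) (S (dyadic_index n t)) w * theta c (S n).
Proof. unfold Theta_cell. cbn [cell_angle]. rewrite <- dyadic_index_S. reflexivity. Qed.

Lemma sumR_ext f g N : (forall j, (j < N)%nat -> f j = g j) -> sumR f N = sumR g N.
Proof. induction N; intros Hfg; simpl; auto. rewrite IHN, Hfg; auto. Qed.

Lemma sumR_0 N : sumR (fun _ => 0) N = 0.
Proof. induction N; simpl; auto. rewrite IHN. ring. Qed.

Lemma sumR_single f q N : (q < N)%nat ->
  sumR (fun j => if Nat.eq_dec j q then f j else 0) N = f q.
Proof.
  induction N; intros Hq; [lia | simpl].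
  destruct (Nat.eq_dec N q) as [-> | E].
  - rewrite (sumR_ext _ (fun _ => 0)), sumR_0; [ring |].
    intros j Hj. destruct (Nat.eq_dec j q); [lia | auto].
  - rewrite IHN by lia. ring.
Qed.

Lemma Theta_eq_Theta_cell c n t w : 0 <= t <= 1 -> Theta c n t w = Theta_cell c n t w.
Proof.
  intros Ht. induction n as [|n IH]; [reflexivity |].
  rewrite Theta_cell_S, <- IH. unfold Theta. cbn [sumR]. f_equal.
  cbv zeta. replace (S n - 1)%nat with n by lia.
  rewrite <- (sumR_single (fun j => (-1) ^ dyadic_index (S n) t * d (S n) (S j) w * theta c (S n))
                (dyadic_index n t) (2 ^ n) (dyadic_index_lt n t)).
  apply sumR_ext. intros j Hj.
  rewrite ind_dyadic_index, rad_dyadic_index by (auto; lia).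
  destruct (Nat.eq_dec j (dyadic_index n t)); ring.
Qed.

(* From [sin y >= y - y^3/6] and [y <= PI/2 < 2]. *)
Lemma asin_bounds x : 0 <= x <= 1 -> 0 <= asin x <= 3 * x.
Proof.
  intros Hx. pose proof (asin_bound x). pose proof PI_RGT_0. pose proof PI_4.
  assert (Hnn : 0 <= asin x).
  { destruct (Rle_dec 0 (asin x)) as [| C]; auto.
    assert (sin (asin x) < 0) by (apply sin_lt_0_var; lra).
    rewrite sin_asin in *; lra. }
  split; auto.
  destruct (sin_bound (asin x) 0 Hnn ltac:(lra)) as [Hs _].
  unfold sin_approx, sin_term in Hs. simpl in Hs. rewrite sin_asin in Hs by lra.
  nra.
Qed.

Lemma cv_of_dominated_increments (u v : nat -> R) (L : R) :
  Un_cv v L -> (forall N n, (N <= n)%nat -> Rabs (u n - u N) <= v n - v N) ->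
  exists l, Un_cv u l /\ forall N, Rabs (l - u N) <= L - v N.
Proof.
  intros HS Hinc.
  assert (Hgrow : Un_growing v).
  { intro n. pose proof (Hinc n (S n) ltac:(lia)). pose proof (Rabs_pos (u (S n) - u n)). lra. }
  assert (Hcau : Cauchy_crit u).
  { intros eps He. destruct (CV_Cauchy v (exist _ L HS) eps He) as [N HN].
    exists N. intros n m Hn Hm. unfold Rdist in *.
    destruct (le_ge_dec n m) as [Hnm | Hnm].
    - rewrite Rabs_minus_sym. pose proof (Hinc n m Hnm).
      pose proof (Rle_abs (v m - v n)). specialize (HN m n Hm Hn). lra.
    - pose proof (Hinc m n Hnm).
      pose proof (Rle_abs (v n - v m)). specialize (HN n m Hn Hm). lra. }
  destruct (Rcomplete.R_complete u Hcau) as [l Hl]. exists l. split; auto.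
  intros N. apply Rnot_lt_le. intros Hlt.
  destruct (Hl (Rabs (l - u N) - (L - v N))) as [M HM]; [lra |].
  specialize (HM (max N M) ltac:(lia)). unfold R_dist in HM.
  pose proof (Hinc N (max N M) ltac:(lia)). pose proof (growing_ineq v L Hgrow HS (max N M)).
  pose proof (Rabs_triang (l - u (max N M)) (u (max N M) - u N)).
  replace (l - u (max N M) + (u (max N M) - u N)) with (l - u N) in * by ring.
  rewrite Rabs_minus_sym in HM. lra.
Qed.

Lemma sumR_sum_f_R0 f N : sumR f (S N) = sum_f_R0 f N.
Proof.
  induction N as [|N IH]; [simpl; ring |].
  change (sumR f (S N) + f (S N) = sum_f_R0 f N + f (S N)). rewrite IH. reflexivity.
Qed.

Lemma Lim_seq_of_Un_cv u l : Un_cv u l -> real (Lim_seq u) = l.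
Proof. intros H. rewrite (is_lim_seq_unique u l); [reflexivity | apply is_lim_seq_Reals, H]. Qed.

Lemma inv_S_small delta : 0 < delta -> exists K, forall k, (K <= k)%nat -> / INR (S k) < delta.
Proof.
  intros Hd. destruct (archimed_cor1 delta Hd) as [K [HK HK0]]. exists K. intros k Hk.
  eapply Rle_lt_trans; [| exact HK].
  apply Rinv_le_contravar; [apply lt_0_INR; lia | apply le_INR; lia].
Qed.

(* Through the sequence [t - 1/(k+1)]. *)
Lemma left_limit_of_cauchy (f : R -> R) (t : R) :
  (forall eps, 0 < eps -> exists delta, 0 < delta /\ forall s1 s2,
     t - delta < s1 < t -> t - delta < s2 < t -> Rabs (f s1 - f s2) < eps) ->
  exists L, forall eps, 0 < eps -> exists delta, 0 < delta /\
    forall s, t - delta < s < t -> Rabs (f s - L) < eps.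
Proof.
  intros Hcau.
  assert (Hin : forall delta k, / INR (S k) < delta -> t - delta < t - / INR (S k) < t).
  { intros delta k Hk. assert (0 < / INR (S k)) by (apply Rinv_0_lt_compat, lt_0_INR; lia). lra. }
  assert (Hu : Cauchy_crit (fun k => f (t - / INR (S k)))).
  { intros eps He. destruct (Hcau eps He) as [delta [Hd Hf]].
    destruct (inv_S_small delta Hd) as [K HK]. exists K. intros n m Hn Hm.
    apply Hf; apply Hin; auto. }
  destruct (Rcomplete.R_complete _ Hu) as [L HL]. exists L. intros eps He.
  destruct (Hcau (eps / 2)) as [delta [Hd Hf]]; [lra |].
  exists delta. split; auto. intros s Hs.
  destruct (inv_S_small delta Hd) as [K HK]. destruct (HL (eps / 2)) as [K' HK']; [lra |].
  specialize (HK (max K K') ltac:(lia)). specialize (HK' (max K K') ltac:(lia)).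
  unfold R_dist in HK'. specialize (Hf s _ Hs (Hin _ _ HK)).
  pose proof (Rabs_triang (f s - f (t - / INR (S (max K K')))) (f (t - / INR (S (max K K'))) - L)).
  replace (f s - f (t - / INR (S (max K K'))) + (f (t - / INR (S (max K K'))) - L))
    with (f s - L) in * by ring.
  lra.
Qed.

Lemma is_RInt_uniform_limit (fn : nat -> R -> R) (f : R -> R) a b (In : nat -> R) (I : R) :
  (forall n, is_RInt (fn n) a b (In n)) -> Un_cv In I ->
  (forall eps, 0 < eps -> exists N, forall n t, (N <= n)%nat -> Rabs (fn n t - f t) < eps) ->
  is_RInt f a b I.
Proof.
  intros Hi HI Hu.
  destruct (filterlim_RInt fn a b eventually eventually_filter f In Hi) as [If [HIf Hf]].
  - apply filterlim_locally. intros eps. destruct (Hu eps (cond_pos eps)) as [N HN].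
    exists N. intros n Hn t. apply HN; auto.
  - replace I with If; auto.
    assert (E : Lim_seq In = If) by (apply is_lim_seq_unique, HIf).
    rewrite (is_lim_seq_unique In I) in E by (apply is_lim_seq_Reals, HI).
    injection E; auto.
Qed.

Lemma RiemannInt_of_is_RInt f a b l :
  is_RInt f a b l -> exists pr : Riemann_integrable f a b, RiemannInt pr = l.
Proof.
  intros H. exists (ex_RInt_Reals_0 _ _ _ (ex_intro _ _ H)).
  rewrite <- RInt_Reals. apply is_RInt_unique, H.
Qed.

Lemma Cnorm_Cmod z : Cnorm z = Cmod z.
Proof. unfold Cnorm, Cmod. f_equal. ring. Qed.

Lemma Cnorm_Csub_diag z : Cnorm (Csub z z) = 0.
Proof. unfold Cnorm, Csub. simpl. rewrite !Rminus_diag, Rmult_0_l, Rplus_0_l. apply sqrt_0. Qed.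

Lemma Cnorm_triangle x y z : Cnorm (Csub x z) <= Cnorm (Csub x y) + Cnorm (Csub y z).
Proof.
  rewrite !Cnorm_Cmod.
  replace (Csub x z) with (Cplus (Csub x y) (Csub y z))
    by (unfold Csub, Cplus; simpl; f_equal; ring).
  apply Cmod_triangle.
Qed.

Lemma Cnorm_Cmul z w : Cnorm (Cmul z w) = Cnorm z * Cnorm w.
Proof. rewrite !Cnorm_Cmod. apply Cmod_mult. Qed.

Lemma Cnorm_Cscal a z : Cnorm (Cscal a z) = Rabs a * Cnorm z.
Proof.
  rewrite <- Cmod_R, !Cnorm_Cmod, <- Cmod_mult. unfold Cscal, Cmult, RtoC. simpl.
  f_equal; f_equal; ring.
Qed.

Lemma Cnorm_Cexpi x : Cnorm (Cexpi x) = 1.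
Proof.
  unfold Cnorm, Cexpi. simpl. rewrite <- sqrt_1. f_equal.
  rewrite <- (sin2_cos2 x). unfold Rsqr. ring.
Qed.

Lemma Rabs_fst_le_Cnorm z : Rabs (fst z) <= Cnorm z.
Proof.
  unfold Cnorm. rewrite <- sqrt_Rsqr_abs. apply sqrt_le_1_alt. unfold Rsqr. nra.
Qed.

Lemma Rabs_snd_le_Cnorm z : Rabs (snd z) <= Cnorm z.
Proof.
  unfold Cnorm. rewrite <- sqrt_Rsqr_abs. apply sqrt_le_1_alt. unfold Rsqr. nra.
Qed.

Lemma Rabs_sin_le u : Rabs (sin u) <= Rabs u.
Proof.
  assert (Hpos : forall x, 0 < x -> Rabs (sin x) <= x).
  { intros x Hx. pose proof (sin_lt_x x Hx). pose proof (SIN_bound x).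
    destruct (Rle_dec 1 x); [apply Rabs_le; lra |].
    pose proof PI2_3_2. assert (0 <= sin x) by (apply sin_ge_0; lra).
    rewrite Rabs_right; lra. }
  destruct (Rtotal_order u 0) as [Hu | [-> | Hu]].
  - rewrite (Rabs_left u), <- Rabs_Ropp, <- sin_neg by lra. apply Hpos. lra.
  - rewrite sin_0. lra.
  - rewrite (Rabs_right u) by lra. auto.
Qed.

(* [|e^{ix} - e^{iy}| = 2 |sin ((x - y) / 2)|]. *)
Lemma Cnorm_Cexpi_sub x y : Cnorm (Csub (Cexpi x) (Cexpi y)) <= Rabs (x - y).
Proof.
  set (h := (x - y) / 2).
  assert (E : Cnorm (Csub (Cexpi x) (Cexpi y)) = sqrt (Rsqr (2 * sin h))).
  { unfold Cnorm, Csub, Cexpi. simpl. f_equal.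
    replace x with (y + 2 * h) by (unfold h; field).
    rewrite cos_plus, sin_plus, cos_2a, sin_2a. pose proof (sin2_cos2 y). pose proof (sin2_cos2 h).
    unfold Rsqr in *. nra. }
  rewrite E, sqrt_Rsqr_abs, Rabs_mult, Rabs_right by lra.
  replace (x - y) with (2 * h) by (unfold h; field).
  rewrite Rabs_mult, (Rabs_right 2) by lra.
  pose proof (Rabs_sin_le h). lra.
Qed.

Lemma Csub_Cmul_l u z w : Csub (Cmul u z) (Cmul u w) = Cmul u (Csub z w).
Proof. unfold Csub, Cmul. simpl. f_equal; ring. Qed.

Lemma Cnorm_unit_Cexpi_sub u x y : Cnorm u = 1 ->
  Cnorm (Csub (Cmul u (Cexpi x)) (Cmul u (Cexpi y))) <= Rabs (x - y).
Proof. intros Hu. rewrite Csub_Cmul_l, Cnorm_Cmul, Hu, Rmult_1_l. apply Cnorm_Cexpi_sub. Qed.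
Lemma R_open_preimage_nonexpansive (g : R -> Cpx) (U : Cpx -> Prop) :
  (forall x y, Cnorm (Csub (g x) (g y)) <= Rabs (x - y)) -> C_open U -> R_open (fun x => U (g x)).
Proof.
  intros Hg HU x Hx. destruct (HU _ Hx) as [eps [He HUe]].
  exists eps. split; auto. intros y Hy. apply HUe. eapply Rle_lt_trans; [apply Hg | auto].
Qed.

(** * Integrals and measurability of the step functions *)

Lemma is_RInt_dyadic_step (Phi : nat -> R) n :
  is_RInt (fun t => Phi (dyadic_index n t)) 0 1 (sumR Phi (2 ^ n) / 2 ^ n).
Proof.
  pose proof (pow2_gt0 n) as Hp.
  assert (Hgen : forall M, (M <= 2 ^ n)%nat ->
     is_RInt (fun t => Phi (dyadic_index n t)) 0 (INR M / 2 ^ n) (sumR Phi M / 2 ^ n)).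
  { induction M as [|M IH]; intros HM.
    - simpl. replace (0 / 2 ^ n) with 0 by (field; lra).
      exact (@is_RInt_point R_NormedModule _ 0).
    - assert (Hle : INR M / 2 ^ n <= INR (S M) / 2 ^ n).
      { rewrite S_INR. apply Rmult_le_compat_r; [apply Rlt_le, Rinv_0_lt_compat |]; lra. }
      replace (sumR Phi (S M) / 2 ^ n)
        with (plus (sumR Phi M / 2 ^ n) (scal (INR (S M) / 2 ^ n - INR M / 2 ^ n) (Phi M)))
        by (rewrite S_INR; simpl; unfold plus, scal; simpl; unfold mult; simpl; field; lra).
      apply (@is_RInt_Chasles R_NormedModule) with (INR M / 2 ^ n); [apply IH; lia |].
      apply (@is_RInt_ext R_NormedModule) with (fun _ => Phi M); [| apply (@is_RInt_const R_NormedModule)].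
      rewrite Rmin_left, Rmax_right by auto. intros x [Hx1 Hx2]. f_equal. symmetry.
      apply dyadic_index_scaled; [lia |].
      apply Rmult_lt_compat_l with (r := 2 ^ n) in Hx1; auto.
      apply Rmult_lt_compat_l with (r := 2 ^ n) in Hx2; auto.
      rewrite S_INR in Hx2. field_simplify in Hx1; field_simplify in Hx2; lra. }
  specialize (Hgen _ (le_n _)). rewrite INR_pow2 in Hgen.
  replace (2 ^ n / 2 ^ n) with 1 in Hgen by (field; lra). exact Hgen.
Qed.

Lemma sumR_lin a b f g N : sumR (fun m => a * f m + b * g m) N = a * sumR f N + b * sumR g N.
Proof. induction N; simpl; [ring | rewrite IHN; ring]. Qed.

Lemma sumR_pairs f M : sumR f (2 * M) = sumR (fun m => f (2 * m)%nat + f (2 * m + 1)%nat) M.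
Proof.
  induction M as [|M IH]; [reflexivity |].
  replace (2 * S M)%nat with (S (S (2 * M))) by lia. cbn [sumR]. rewrite IH.
  replace (S (2 * M)) with (2 * M + 1)%nat by lia. ring.
Qed.

Lemma cell_angle_children c n m w :
  cell_angle c (S n) (2 * m) w = cell_angle c n m w + d (S n) (S m) w * theta c (S n) /\
  cell_angle c (S n) (2 * m + 1) w = cell_angle c n m w - d (S n) (S m) w * theta c (S n).
Proof.
  cbn [cell_angle].
  replace ((2 * m) / 2)%nat with m by (apply Nat.div_unique with 0%nat; lia).
  replace ((2 * m + 1) / 2)%nat with m by (apply Nat.div_unique with 1%nat; lia).
  rewrite pow_1_even, Nat.add_1_r, pow_1_odd. split; ring.
Qed.

Fixpoint cos_prod (c : nat -> R) (n : nat) : R :=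
  match n with O => 1 | S n' => cos_prod c n' * cos (theta c (S n')) end.

(* The two children of a cell carry the angles [g + d theta] and [g - d theta] with
   [d = +-1], and [cos (g + y) + cos (g - y) = 2 cos g cos y]. *)
Lemma cell_sums c n w :
  sumR (fun m => cos (cell_angle c n m w)) (2 ^ n) = 2 ^ n * cos_prod c n /\
  sumR (fun m => sin (cell_angle c n m w)) (2 ^ n) = 0.
Proof.
  induction n as [|n [IHc IHs]]; [simpl; rewrite cos_0, sin_0; split; ring |].
  rewrite Nat.pow_succ_r', !sumR_pairs.
  set (th := theta c (S n)).
  assert (Hcos : forall y, y = th \/ y = - th -> cos y = cos th)
    by (intros y [-> | ->]; [| rewrite cos_neg]; reflexivity).
  assert (Hd : forall m, d (S n) (S m) w * th = th \/ d (S n) (S m) w * th = - th)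
    by (intro m; unfold d; destruct (w _ _); [left | right]; ring).
  rewrite (sumR_ext _ (fun m => 2 * cos th * cos (cell_angle c n m w) + 0 * 0)).
  2: { intros m _. destruct (cell_angle_children c n m w) as [-> ->]. fold th.
       rewrite cos_plus, cos_minus, (Hcos _ (Hd m)). ring. }
  rewrite (sumR_ext (fun m => sin _ + sin _) (fun m => 2 * cos th * sin (cell_angle c n m w) + 0 * 0)).
  2: { intros m _. destruct (cell_angle_children c n m w) as [-> ->]. fold th.
       rewrite sin_plus, sin_minus, (Hcos _ (Hd m)). ring. }
  rewrite !(sumR_lin _ 0 _ (fun _ => 0)), IHc, IHs. simpl. fold th. split; ring.
Qed.

Lemma is_RInt_cos_Theta_cell c n w :
  is_RInt (fun t => cos (Theta_cell c n t w)) 0 1 (cos_prod c n).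
Proof.
  pose proof (pow2_gt0 n).
  pose proof (is_RInt_dyadic_step (fun m => cos (cell_angle c n m w)) n) as E.
  rewrite (proj1 (cell_sums c n w)) in E.
  replace (2 ^ n * cos_prod c n / 2 ^ n) with (cos_prod c n) in E by (field; lra). exact E.
Qed.

Lemma is_RInt_sin_Theta_cell c n w :
  is_RInt (fun t => sin (Theta_cell c n t w)) 0 1 0.
Proof.
  pose proof (pow2_gt0 n).
  pose proof (is_RInt_dyadic_step (fun m => sin (cell_angle c n m w)) n) as E.
  rewrite (proj2 (cell_sums c n w)) in E.
  replace (0 / 2 ^ n) with 0 in E by (field; lra). exact E.
Qed.

Lemma R_open_scaled_lt k a : 0 < k -> R_open (fun t => k * t < a).
Proof.
  intros Hk x Hx. exists ((a - k * x) / k). split; [apply Rdiv_lt_0_compat; lra |].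
  intros y Hy. apply Rabs_def2 in Hy.
  assert (Hky : k * (y - x) < k * ((a - k * x) / k)) by (apply Rmult_lt_compat_l; lra).
  field_simplify in Hky; lra.
Qed.

Lemma R_open_scaled_gt k a : 0 < k -> R_open (fun t => a < k * t).
Proof.
  intros Hk x Hx. exists ((k * x - a) / k). split; [apply Rdiv_lt_0_compat; lra |].
  intros y Hy. apply Rabs_def2 in Hy.
  assert (Hky : k * (x - y) < k * ((k * x - a) / k)) by (apply Rmult_lt_compat_l; lra).
  field_simplify in Hky; lra.
Qed.

Lemma borel_scaled_le k a : 0 < k -> borel_R (fun t => a <= k * t).
Proof.
  intros Hk. eapply sigma_gen_ext; [apply sg_compl, sg_base, (R_open_scaled_lt k a Hk) |].
  intro x; simpl; lra.
Qed.

Lemma borel_unit_interval : borel_R (fun t => 0 <= t <= 1).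
Proof.
  eapply sigma_gen_ext.
  - apply sigma_gen_inter2; [apply (borel_scaled_le 1 0) | apply sg_compl, sg_base, (R_open_scaled_gt 1 1)]; lra.
  - intro x; simpl; lra.
Qed.

Lemma borel_dyadic_index n m : borel_R (fun t => dyadic_index n t = m).
Proof.
  pose proof (pow2_gt0 n).
  eapply sigma_gen_ext; [| intro t; symmetry; apply dyadic_index_char].
  apply sigma_gen_inter2; [apply sigma_gen_const | apply sigma_gen_inter2];
    apply sigma_gen_union2; try apply sigma_gen_const.
  - apply borel_scaled_le; auto.
  - apply sg_base, R_open_scaled_lt; auto.
Qed.

Lemma cell_angle_coords c n : forall m w w',
  (forall k j, (k <= n)%nat -> (j <= S m)%nat -> w k j = w' k j) ->
  cell_angle c n m w = cell_angle c n m w'.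
Proof.
  induction n as [|n IH]; intros m w w' Hw; [reflexivity |].
  assert (m / 2 <= m)%nat by (apply Nat.Div0.div_le_upper_bound; lia).
  cbn [cell_angle]. rewrite (IH (m / 2)%nat w w') by (intros; apply Hw; lia).
  unfold d. rewrite Hw by lia. reflexivity.
Qed.

Lemma cyl_cell_angle c n m (P : R -> Prop) : cyl_sigma (fun w => P (cell_angle c n m w)).
Proof.
  apply (cyl_sigma_finite_dependence (list_prod (seq 0 (S n)) (seq 0 (S (S m))))).
  intros w w' Hw. rewrite (cell_angle_coords c n m w w'); [tauto |].
  intros k j Hk Hj. apply Hw, in_prod; apply in_seq; lia.
Qed.

Lemma prod_Theta_cell c n (P : R -> Prop) :
  prod_sigma (fun p => P (Theta_cell c n (fst p) (snd p))).
Proof.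
  eapply sigma_gen_ext.
  - apply (sg_union _ (fun m p => dyadic_index n (fst p) = m /\ P (cell_angle c n m (snd p)))).
    intro m. apply sg_base. exists (fun t => dyadic_index n t = m), (fun w => P (cell_angle c n m w)).
    split; [apply borel_dyadic_index | split; [apply cyl_cell_angle | tauto]].
  - intros [t w]. unfold Theta_cell. simpl. split.
    + intros [m [<- Hm]]; auto.
    + intros Hp; exists (dyadic_index n t); auto.
Qed.

(** * The limit *)

Definition theta_sum (c : nat -> R) (N : nat) : R := sumR (fun k => theta c (S k)) N.

Definition theta_tail (c : nat -> R) (N : nat) : R :=
  real (Lim_seq (theta_sum c)) - theta_sum c N.

Definition Theta_lim (c : nat -> R) (t : R) (w : Omega) : R :=
  real (Lim_seq (fun n => Theta_cell c n t w)).

(* [alpha_n = sqrt c_n * phase * e^{i Theta_n}] with a unimodular [phase]; when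
   [c_0 = 0] the paper's normalisation is [phase = 1]. *)
Definition phase (c : nat -> R) (a0 : Cpx) : Cpx :=
  if Req_EM_T (c O) 0 then (1, 0) else Cscal (/ sqrt (c O)) a0.

Definition alpha (c : nat -> R) (a0 : Cpx) (t : R) (w : Omega) : Cpx :=
  Cmul (phase c a0) (Cexpi (Theta_lim c t w)).

Section LimitProcess.

Variable c : nat -> R.
Hypothesis hmono : forall n, c n <= c (S n).
Hypothesis hc0 : 0 <= c O.
Hypothesis hc1 : 0 < c 1%nat.

Lemma c_mono m n : (m <= n)%nat -> c m <= c n.
Proof. induction 1; [lra | eapply Rle_trans; eauto]. Qed.

Lemma c_pos n : (1 <= n)%nat -> 0 < c n.
Proof. intros Hn. apply Rlt_le_trans with (c 1%nat); auto. apply c_mono; auto. Qed.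

Lemma theta_ratio_bounds k : 0 <= (c (S k) - c k) / c (S k) <= 1.
Proof.
  pose proof (c_pos (S k) ltac:(lia)). pose proof (hmono k).
  assert (0 <= c k) by (apply Rle_trans with (c O); auto; apply c_mono; lia).
  split; [apply Rdiv_le_0_compat; lra |].
  apply Rmult_le_reg_r with (c (S k)); auto. field_simplify; lra.
Qed.

Lemma theta_bounds k : 0 <= theta c (S k) <= 3 / sqrt (c 1%nat) * sqrt (c (S k) - c k).
Proof.
  unfold theta. replace (S k - 1)%nat with k by lia.
  pose proof (theta_ratio_bounds k) as Hr.
  assert (Hx : 0 <= sqrt ((c (S k) - c k) / c (S k)) <= 1).
  { split; [apply sqrt_pos | rewrite <- sqrt_1; apply sqrt_le_1_alt; lra]. }
  destruct (asin_bounds _ Hx) as [Hnonneg Hle]. split; auto.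
  eapply Rle_trans; [exact Hle |].
  assert (c 1%nat <= c (S k)) by (apply c_mono; lia). pose proof (hmono k).
  assert (0 < sqrt (c 1%nat)) by (apply sqrt_lt_R0; lra).
  assert (sqrt (c 1%nat) <= sqrt (c (S k))) by (apply sqrt_le_1_alt; lra).
  pose proof (sqrt_pos (c (S k) - c k)).
  rewrite sqrt_div_alt by (apply c_pos; lia).
  replace (3 / sqrt (c 1%nat) * sqrt (c (S k) - c k))
    with (3 * (sqrt (c (S k) - c k) / sqrt (c 1%nat))) by (field; lra).
  apply Rmult_le_compat_l; [lra |]. apply Rmult_le_compat_l; [lra |].
  apply Rinv_le_contravar; lra.
Qed.

Lemma Theta_cell_increment N n t w : (N <= n)%nat ->
  Rabs (Theta_cell c n t w - Theta_cell c N t w) <= theta_sum c n - theta_sum c N.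
Proof.
  induction 1 as [| n Hn IH]; [rewrite Rminus_diag, Rabs_R0; lra |].
  rewrite Theta_cell_S. unfold theta_sum in *. simpl sumR.
  destruct (theta_bounds n) as [Hth _].
  set (x := (-1) ^ dyadic_index (S n) t * d (S n) (S (dyadic_index n t)) w * theta c (S n)).
  assert (Hx : Rabs x = theta c (S n)).
  { unfold x, d. rewrite !Rabs_mult, pow_1_abs, (Rabs_right (theta c (S n))) by lra.
    destruct (w _ _); rewrite ?Rabs_R1, ?Rabs_m1; ring. }
  pose proof (Rabs_triang (Theta_cell c n t w - Theta_cell c N t w) x).
  replace (Theta_cell c n t w + x - Theta_cell c N t w)
    with (Theta_cell c n t w - Theta_cell c N t w + x) by ring.
  lra.
Qed.

(* [cos theta_k = sqrt (c_(k-1) / c_k)], so the product telescopes. *)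
Lemma cos_prod_eq n : (1 <= n)%nat -> cos_prod c n = sqrt (c O / c n).
Proof.
  assert (Hcos : forall k, cos (theta c (S k)) = sqrt (c k / c (S k))).
  { intro k. unfold theta. replace (S k - 1)%nat with k by lia.
    pose proof (theta_ratio_bounds k).
    pose proof (c_pos (S k) ltac:(lia)).
    rewrite cos_asin.
    - f_equal. unfold Rsqr. rewrite sqrt_sqrt by lra. field. lra.
    - split; [pose proof (sqrt_pos ((c (S k) - c k) / c (S k))); lra |].
      rewrite <- sqrt_1. apply sqrt_le_1_alt; lra. }
  induction 1 as [| m Hm IH]; simpl.
  - rewrite Hcos. f_equal. ring.
  - rewrite IH, Hcos, <- sqrt_mult_alt.
    + f_equal. pose proof (c_pos m Hm). pose proof (c_pos (S m) ltac:(lia)).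
      field. lra.
    + apply Rdiv_le_0_compat; [auto | apply c_pos; auto].
Qed.

Hypothesis hsum : exists l, Un_cv (fun N => sum_f_R0 (fun n => sqrt (c (S n) - c n)) N) l.

Lemma theta_sum_cv : Un_cv (theta_sum c) (real (Lim_seq (theta_sum c))).
Proof.
  destruct hsum as [l Hl].
  set (g := fun n => sqrt (c (S n) - c n)).
  assert (Hgrow : Un_growing (fun N => sum_f_R0 g N)).
  { intro n. simpl. pose proof (sqrt_pos (c (S (S n)) - c (S n))). unfold g. lra. }
  assert (Hg : forall N, sumR g N <= l).
  { intro N. apply Rle_trans with (sumR g (S N)).
    - simpl. assert (0 <= g N) by apply sqrt_pos. lra.
    - rewrite sumR_sum_f_R0. apply (growing_ineq _ l Hgrow Hl). }
  set (K := 3 / sqrt (c 1%nat)).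
  assert (HK : 0 <= K) by (apply Rdiv_le_0_compat; [lra | apply sqrt_lt_R0; lra]).
  assert (Hgrow' : Un_growing (theta_sum c)).
  { intro n. unfold theta_sum. simpl. pose proof (theta_bounds n). lra. }
  assert (Hub : forall N, theta_sum c N <= K * l).
  { intro N. apply Rle_trans with (K * sumR g N); [| apply Rmult_le_compat_l; auto].
    induction N as [|N IH]; unfold theta_sum in *; simpl; [lra |].
    destruct (theta_bounds N) as [_ Hth]. fold K in Hth.
    change (g N) with (sqrt (c (S N) - c N)). rewrite Rmult_plus_distr_l. lra. }
  destruct (growing_cv (theta_sum c) Hgrow') as [L HL].
  { exists (K * l). intros x [n ->]. auto. }
  rewrite (Lim_seq_of_Un_cv _ L HL). exact HL.
Qed.

Lemma theta_tail_cv : Un_cv (theta_tail c) 0.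
Proof.
  intros eps He. destruct (theta_sum_cv eps He) as [N HN]. exists N. intros n Hn.
  specialize (HN n Hn). unfold R_dist, theta_tail in *.
  rewrite Rabs_minus_sym in HN. rewrite Rminus_0_r. exact HN.
Qed.

Lemma Theta_lim_approx N t w : Rabs (Theta_lim c t w - Theta_cell c N t w) <= theta_tail c N.
Proof.
  destruct (cv_of_dominated_increments (fun n => Theta_cell c n t w) (theta_sum c) _
              theta_sum_cv (fun N n => Theta_cell_increment N n t w)) as [l [Hl Hb]].
  unfold Theta_lim, theta_tail. rewrite (Lim_seq_of_Un_cv _ l Hl). apply Hb.
Qed.

Lemma theta_tail_small eps : 0 < eps -> exists N, forall n, (N <= n)%nat -> theta_tail c n < eps.
Proof.
  intros He. destruct (theta_tail_cv eps He) as [N HN]. exists N. intros n Hn.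
  specialize (HN n Hn). unfold R_dist in HN. rewrite Rminus_0_r in HN.
  apply Rabs_def2 in HN. lra.
Qed.

Lemma Theta_cell_cv t w : Un_cv (fun n => Theta_cell c n t w) (Theta_lim c t w).
Proof.
  intros eps He. destruct (theta_tail_small eps He) as [N HN]. exists N. intros n Hn.
  unfold R_dist. rewrite Rabs_minus_sym. eapply Rle_lt_trans; [apply Theta_lim_approx | auto].
Qed.

Lemma prod_Theta_lim V : R_open V -> prod_sigma (fun p => V (Theta_lim c (fst p) (snd p))).
Proof.
  apply (sigma_gen_lim _ _ (fun n p => Theta_cell c n (fst p) (snd p))).
  - intro p. apply Theta_cell_cv; auto.
  - intros n P. apply prod_Theta_cell.
Qed.

Lemma cyl_Theta_lim t V : R_open V -> cyl_sigma (fun w => V (Theta_lim c t w)).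
Proof.
  apply (sigma_gen_lim _ _ (fun n w => Theta_cell c n t w)).
  - intro w. apply Theta_cell_cv; auto.
  - intros n P. apply cyl_cell_angle.
Qed.

Hypothesis hlim : Un_cv c 1.

Lemma cos_prod_cv : Un_cv (cos_prod c) (sqrt (c O)).
Proof.
  assert (Hq : Un_cv (fun n => sqrt (c O / c n)) (sqrt (c O / 1))).
  { apply (continuity_seq (fun x => sqrt (c O / x))); auto.
    apply continuity_pt_comp with (f2 := sqrt).
    - apply continuity_pt_div; [apply continuity_pt_const; intros ? ?; auto |
        apply derivable_continuous_pt, derivable_pt_id | lra].
    - apply continuity_pt_sqrt. lra. }
  rewrite Rdiv_1_r in Hq. intros eps He. destruct (Hq eps He) as [N HN].
  exists (S N). intros n Hn. rewrite cos_prod_eq by lia. apply HN. lia.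
Qed.

Lemma Theta_cell_uniform_cv (h : R -> R) :
  (forall x y, Rabs (h x - h y) <= Rabs (x - y)) ->
  forall w eps, 0 < eps -> exists N, forall n t, (N <= n)%nat ->
    Rabs (h (Theta_cell c n t w) - h (Theta_lim c t w)) < eps.
Proof.
  intros Hh w eps He. destruct (theta_tail_small eps He) as [N HN].
  exists N. intros n t Hn. eapply Rle_lt_trans; [apply Hh |].
  rewrite Rabs_minus_sym. eapply Rle_lt_trans; [apply Theta_lim_approx | apply HN]; auto.
Qed.

Lemma is_RInt_cos_Theta_lim w : is_RInt (fun t => cos (Theta_lim c t w)) 0 1 (sqrt (c O)).
Proof.
  apply (is_RInt_uniform_limit (fun n t => cos (Theta_cell c n t w)) _ _ _ (cos_prod c)).
  - intro n. apply is_RInt_cos_Theta_cell.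
  - apply cos_prod_cv.
  - apply Theta_cell_uniform_cv. intros x y.
    eapply Rle_trans; [apply (Rabs_fst_le_Cnorm (Csub (Cexpi x) (Cexpi y))) | apply Cnorm_Cexpi_sub].
Qed.

Lemma is_RInt_sin_Theta_lim w : is_RInt (fun t => sin (Theta_lim c t w)) 0 1 0.
Proof.
  apply (is_RInt_uniform_limit (fun n t => sin (Theta_cell c n t w)) _ _ _ (fun _ => 0)).
  - intro n. apply is_RInt_sin_Theta_cell.
  - intros eps He. exists O. intros. unfold R_dist. rewrite Rminus_diag, Rabs_R0. auto.
  - apply Theta_cell_uniform_cv. intros x y.
    eapply Rle_trans; [apply (Rabs_snd_le_Cnorm (Csub (Cexpi x) (Cexpi y))) | apply Cnorm_Cexpi_sub].
Qed.

Variable a0 : Cpx.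
Hypothesis ha0 : Cnorm a0 = sqrt (c O).

Lemma Cnorm_phase : Cnorm (phase c a0) = 1.
Proof.
  unfold phase. destruct (Req_EM_T (c O) 0) as [E | E].
  - unfold Cnorm. simpl. replace (1 * 1 + 0 * 0) with 1 by ring. apply sqrt_1.
  - assert (0 < sqrt (c O)) by (apply sqrt_lt_R0; lra).
    rewrite Cnorm_Cscal, ha0, Rabs_right by (apply Rle_ge, Rlt_le, Rinv_0_lt_compat; auto).
    field. lra.
Qed.

Lemma phase_scale : Cscal (sqrt (c O)) (phase c a0) = a0.
Proof.
  unfold phase. destruct (Req_EM_T (c O) 0) as [E | E].
  - rewrite E, sqrt_0 in *. unfold Cnorm in ha0. apply sqrt_eq_0 in ha0; [| nra].
    destruct a0 as [x y]. unfold Cscal. simpl in *. f_equal; nra.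
  - assert (0 < sqrt (c O)) by (apply sqrt_lt_R0; lra).
    destruct a0 as [x y]. unfold Cscal. simpl. f_equal; field; lra.
Qed.

Lemma alpha_n_phase n t w : 0 <= c n ->
  alpha_n c a0 n t w = Cscal (sqrt (c n)) (Cmul (phase c a0) (Cexpi (Theta c n t w))).
Proof.
  intros Hn. unfold alpha_n, phase. destruct (Req_EM_T (c O) 0) as [E | E].
  - unfold Cscal, Cmul. simpl. f_equal; ring.
  - rewrite sqrt_div_alt by lra. destruct a0 as [x y]. unfold Cscal, Cmul, Rdiv. simpl.
    f_equal; ring.
Qed.

Lemma Cnorm_alpha t w : Cnorm (alpha c a0 t w) = 1.
Proof. unfold alpha. rewrite Cnorm_Cmul, Cnorm_phase, Cnorm_Cexpi. ring. Qed.

Lemma alpha_nonexpansive s t w :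
  Cnorm (Csub (alpha c a0 s w) (alpha c a0 t w)) <= Rabs (Theta_lim c s w - Theta_lim c t w).
Proof. apply Cnorm_unit_Cexpi_sub, Cnorm_phase. Qed.

Lemma alpha_n_uniform_cv w eps : 0 < eps -> exists N, forall n t, (N <= n)%nat -> 0 <= t <= 1 ->
  Cnorm (Csub (alpha_n c a0 n t w) (alpha c a0 t w)) < eps.
Proof.
  intros He.
  assert (Hsqrt : Un_cv (fun n => sqrt (c n)) 1).
  { rewrite <- sqrt_1. apply (continuity_seq sqrt); auto. apply continuity_pt_sqrt. lra. }
  destruct (Hsqrt (eps / 2)) as [N1 HN1]; [lra |].
  destruct (theta_tail_small (eps / 2)) as [N2 HN2]; [lra |].
  exists (max N1 N2). intros n t Hn Ht.
  assert (Hcn : 0 <= c n) by (apply Rle_trans with (c O); auto; apply c_mono; auto; lia).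
  rewrite alpha_n_phase, Theta_eq_Theta_cell by auto.
  set (z := Cmul (phase c a0) (Cexpi (Theta_cell c n t w))).
  assert (Hz : Cnorm (Csub (Cscal (sqrt (c n)) z) z) = Rabs (sqrt (c n) - 1)).
  { replace (Csub (Cscal (sqrt (c n)) z) z) with (Cscal (sqrt (c n) - 1) z)
      by (unfold Csub, Cscal; simpl; f_equal; ring).
    rewrite Cnorm_Cscal. unfold z. rewrite Cnorm_Cmul, Cnorm_phase, Cnorm_Cexpi by auto. ring. }
  pose proof (Cnorm_triangle (Cscal (sqrt (c n)) z) z (alpha c a0 t w)).
  pose proof (Cnorm_unit_Cexpi_sub (phase c a0) (Theta_cell c n t w) (Theta_lim c t w)
                Cnorm_phase) as Hlip.
  pose proof (Theta_lim_approx n t w) as Happ. rewrite Rabs_minus_sym in Happ.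
  specialize (HN1 n ltac:(lia)). specialize (HN2 n ltac:(lia)). unfold R_dist in HN1.
  fold z in Hlip. unfold alpha in *. lra.
Qed.

Lemma alpha_prod_measurable E : borel_C E ->
  prod_sigma (fun p => 0 <= fst p <= 1 /\ E (alpha c a0 (fst p) (snd p))).
Proof.
  intros HE. apply sigma_gen_inter2.
  - apply sg_base. exists (fun t => 0 <= t <= 1), (fun _ => True).
    split; [apply borel_unit_interval | split; [apply sg_full | tauto]].
  - apply (sigma_gen_preimage_borel_C _ _ (fun p => alpha c a0 (fst p) (snd p))); auto.
    intros U HU. apply (prod_Theta_lim (fun x => U (Cmul (phase c a0) (Cexpi x)))).
    apply R_open_preimage_nonexpansive; auto.
    intros x y. apply Cnorm_unit_Cexpi_sub, Cnorm_phase; auto.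
Qed.

Lemma alpha_cyl_measurable t E : borel_C E -> cyl_sigma (fun w => E (alpha c a0 t w)).
Proof.
  apply (sigma_gen_preimage_borel_C _ _ (fun w => alpha c a0 t w)).
  intros U HU. apply (cyl_Theta_lim t (fun x => U (Cmul (phase c a0) (Cexpi x)))).
  apply R_open_preimage_nonexpansive; auto.
  intros x y. apply Cnorm_unit_Cexpi_sub, Cnorm_phase; auto.
Qed.

Variable w : Omega.

Lemma Theta_lim_same_cell N s t : dyadic_index N s = dyadic_index N t ->
  Rabs (Theta_lim c s w - Theta_lim c t w) <= 2 * theta_tail c N.
Proof.
  intros E.
  assert (Ecell : Theta_cell c N s w = Theta_cell c N t w) by (unfold Theta_cell; rewrite E; auto).
  pose proof (Theta_lim_approx N s w) as Hs.
  pose proof (Theta_lim_approx N t w) as Ht.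
  pose proof (Rabs_triang (Theta_lim c s w - Theta_cell c N s w)
                          (Theta_cell c N t w - Theta_lim c t w)) as Htri.
  rewrite Rabs_minus_sym in Ht.
  replace (Theta_lim c s w - Theta_cell c N s w + (Theta_cell c N t w - Theta_lim c t w))
    with (Theta_lim c s w - Theta_lim c t w) in Htri by (rewrite Ecell; ring).
  lra.
Qed.

Lemma Theta_lim_small_level eps : 0 < eps ->
  exists N, forall s t, dyadic_index N s = dyadic_index N t -> Rabs (Theta_lim c s w - Theta_lim c t w) < eps.
Proof.
  intros He. destruct (theta_tail_small (eps / 2)) as [N HN]; [lra |].
  exists N. intros s t E. specialize (HN N (le_n N)).
  pose proof (Theta_lim_same_cell N s t E). lra.
Qed.

Lemma Theta_lim_continuous_nondyadic t : 0 <= t <= 1 -> ~ dyadic t ->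
  forall eps, 0 < eps -> exists delta, 0 < delta /\
    forall s, Rabs (s - t) < delta -> Rabs (Theta_lim c s w - Theta_lim c t w) < eps.
Proof.
  intros Ht Hd eps He. destruct (Theta_lim_small_level eps He) as [N HN].
  destruct (dyadic_index_nondyadic N t Ht Hd) as [delta [Hdelta Hidx]].
  exists delta. split; auto.
Qed.

Lemma Theta_lim_right_continuous t : 0 <= t < 1 ->
  forall eps, 0 < eps -> exists delta, 0 < delta /\
    forall s, t <= s < t + delta -> Rabs (Theta_lim c s w - Theta_lim c t w) < eps.
Proof.
  intros Ht eps He. destruct (Theta_lim_small_level eps He) as [N HN].
  destruct (dyadic_index_right N t Ht) as [delta [Hdelta Hidx]].
  exists delta. split; auto.
Qed.

Lemma Theta_lim_left_limit t : 0 < t <= 1 ->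
  exists L, forall eps, 0 < eps -> exists delta, 0 < delta /\
    forall s, t - delta < s < t -> Rabs (Theta_lim c s w - L) < eps.
Proof.
  intros Ht. apply left_limit_of_cauchy. intros eps He.
  destruct (Theta_lim_small_level eps He) as [N HN].
  destruct (dyadic_index_left N t Ht) as [m [delta [Hdelta Hidx]]].
  exists delta. split; auto. intros s1 s2 H1 H2. apply HN. rewrite !Hidx; auto.
Qed.

Lemma alpha_continuous_nondyadic t : 0 <= t <= 1 -> ~ dyadic t ->
  forall eps, 0 < eps -> exists delta, 0 < delta /\
    forall s, 0 <= s <= 1 -> Rabs (s - t) < delta -> Cnorm (Csub (alpha c a0 s w) (alpha c a0 t w)) < eps.
Proof.
  intros Ht Hd eps He.
  destruct (Theta_lim_continuous_nondyadic t Ht Hd eps He) as [delta [Hdelta Hs]].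
  exists delta. split; auto. intros s _ Hst.
  eapply Rle_lt_trans; [apply alpha_nonexpansive | apply Hs]; auto.
Qed.

Lemma alpha_right_continuous t : 0 <= t <= 1 ->
  forall eps, 0 < eps -> exists delta, 0 < delta /\
    forall s, t <= s <= 1 -> s - t < delta -> Cnorm (Csub (alpha c a0 s w) (alpha c a0 t w)) < eps.
Proof.
  intros Ht eps He. destruct (Rlt_dec t 1) as [Ht1 | Ht1].
  - destruct (Theta_lim_right_continuous t (conj (proj1 Ht) Ht1) eps He)
      as [delta [Hdelta Hs]].
    exists delta. split; auto. intros s Hs1 Hs2.
    eapply Rle_lt_trans; [apply alpha_nonexpansive | apply Hs]; auto; lra.
  - exists 1. split; [lra |]. intros s Hs _. replace s with t by lra.
    rewrite Cnorm_Csub_diag. auto.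
Qed.

Lemma alpha_left_limit t : 0 < t <= 1 ->
  exists L, forall eps, 0 < eps -> exists delta, 0 < delta /\
    forall s, 0 <= s < t -> t - s < delta -> Cnorm (Csub (alpha c a0 s w) L) < eps.
Proof.
  intros Ht. destruct (Theta_lim_left_limit t Ht) as [L HL].
  exists (Cmul (phase c a0) (Cexpi L)). intros eps He.
  destruct (HL eps He) as [delta [Hdelta Hs]]. exists delta. split; auto. intros s Hs1 Hs2.
  eapply Rle_lt_trans; [apply Cnorm_unit_Cexpi_sub, Cnorm_phase; auto | apply Hs; lra].
Qed.

Lemma is_RInt_alpha :
  is_RInt (fun t => fst (alpha c a0 t w)) 0 1 (fst a0) /\
  is_RInt (fun t => snd (alpha c a0 t w)) 0 1 (snd a0).
Proof.
  pose proof (is_RInt_cos_Theta_lim w) as Hcos.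
  pose proof (is_RInt_sin_Theta_lim w) as Hsin.
  set (u := phase c a0).
  assert (Ea0 : a0 = (sqrt (c O) * fst u, sqrt (c O) * snd u))
    by (rewrite <- phase_scale at 1; reflexivity).
  split.
  - replace (fst a0) with (minus (scal (fst u) (sqrt (c O))) (scal (snd u) 0))
      by (rewrite Ea0; unfold minus, plus, opp, scal; simpl; unfold mult; simpl; ring).
    apply (@is_RInt_ext R_NormedModule
             (fun t => minus (scal (fst u) (cos (Theta_lim c t w))) (scal (snd u) (sin (Theta_lim c t w))))).
    + intros t _. unfold alpha, Cmul, Cexpi. fold u. simpl.
      unfold minus, plus, opp, scal. simpl. unfold mult. simpl. ring.
    + apply (@is_RInt_minus R_NormedModule); apply (@is_RInt_scal R_NormedModule); auto.
  - replace (snd a0) with (plus (scal (snd u) (sqrt (c O))) (scal (fst u) 0))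
      by (rewrite Ea0; unfold plus, scal; simpl; unfold mult; simpl; ring).
    apply (@is_RInt_ext R_NormedModule
             (fun t => plus (scal (snd u) (cos (Theta_lim c t w))) (scal (fst u) (sin (Theta_lim c t w))))).
    + intros t _. unfold alpha, Cmul, Cexpi. fold u. simpl.
      unfold plus, scal. simpl. unfold mult. simpl. ring.
    + apply (@is_RInt_plus R_NormedModule); apply (@is_RInt_scal R_NormedModule); auto.
Qed.

End LimitProcess.

Theorem mainTheorem5 (c : nat -> R) (alpha0 : Cpx)
  (hmono : forall n, c n <= c (S n))
  (hc0 : 0 <= c O) (hc1 : 0 < c 1%nat)
  (halpha0 : Cnorm alpha0 = sqrt (c O))
  (hlim : Un_cv c 1)
  (hsum : exists l, Un_cv (fun N => sum_f_R0 (fun n => sqrt (c (S n) - c n)) N) l) :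
  exists alpha : R -> Omega -> Cpx,
    (forall w eps, 0 < eps -> exists N, forall n t, (N <= n)%nat -> 0 <= t <= 1 ->
        Cnorm (Csub (alpha_n c alpha0 n t w) (alpha t w)) < eps) /\
    (forall E, borel_C E ->
        prod_sigma (fun p => 0 <= fst p <= 1 /\ E (alpha (fst p) (snd p)))) /\
    (forall t, 0 <= t <= 1 -> forall E, borel_C E ->
        cyl_sigma (fun w => E (alpha t w))) /\
    (forall w,
      (forall t, 0 <= t <= 1 -> ~ dyadic t ->
         forall eps, 0 < eps -> exists delta, 0 < delta /\
           forall s, 0 <= s <= 1 -> Rabs (s - t) < delta ->
             Cnorm (Csub (alpha s w) (alpha t w)) < eps) /\
      inhabited (Riemann_integrable (fun t => fst (alpha t w)) 0 1) /\
      inhabited (Riemann_integrable (fun t => snd (alpha t w)) 0 1) /\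
      (forall t, dyadic t ->
         (forall eps, 0 < eps -> exists delta, 0 < delta /\
            forall s, t <= s <= 1 -> s - t < delta ->
              Cnorm (Csub (alpha s w) (alpha t w)) < eps) /\
         (0 < t -> exists L : Cpx, forall eps, 0 < eps -> exists delta, 0 < delta /\
            forall s, 0 <= s < t -> t - s < delta ->
              Cnorm (Csub (alpha s w) L) < eps)) /\
      (forall t, 0 <= t <= 1 -> Cnorm (alpha t w) = 1) /\
      (exists (pr1 : Riemann_integrable (fun t => fst (alpha t w)) 0 1)
              (pr2 : Riemann_integrable (fun t => snd (alpha t w)) 0 1),
          RiemannInt pr1 = fst alpha0 /\ RiemannInt pr2 = snd alpha0)).
Proof.
  exists (alpha c alpha0). split; [| split; [| split]].
  - intros w. eapply alpha_n_uniform_cv; eauto.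
  - eapply alpha_prod_measurable; eauto.
  - intros t _. eapply alpha_cyl_measurable; eauto.
  - intro w.
    destruct (is_RInt_alpha c hmono hc0 hc1 hsum hlim alpha0 halpha0 w) as [Hfst Hsnd].
    destruct (RiemannInt_of_is_RInt _ _ _ _ Hfst) as [pr1 E1].
    destruct (RiemannInt_of_is_RInt _ _ _ _ Hsnd) as [pr2 E2].
    split; [| split; [| split; [| split; [| split]]]].
    + eapply alpha_continuous_nondyadic; eauto.
    + exact (inhabits pr1).
    + exact (inhabits pr2).
    + intros t [Ht _]. split.
      * eapply alpha_right_continuous; eauto.
      * intros Ht0. eapply alpha_left_limit; eauto. lra.
    + intros t _. eapply Cnorm_alpha; eauto.
    + exists pr1, pr2. auto.
Qed.
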